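(* Let $p$ be an odd prime and $\lambda$ a nonempty self-conjugate partition. If $a^*_\lambda$ is even, then $p\mid a^*_\lambda$.
   Context: Partitions: $\lambda=(\lambda_1\ge\lambda_2\ge\cdots)$ with finitely many nonzero parts; $l(\lambda)$ = number of nonzero parts; Young diagram $[\lambda]=\{(i,j): i\ge1, 1\le j\le\lambda_i\}$ ($i$ = row, increasing downward); self-conjugate means $(i,j)\in[\lambda]\iff(j,i)\in[\lambda]$. Rim and $p$-rim: the rim is the set of nodes $(i,j)\in[\lambda]$ with $(i+1,j+1)\notin[\lambda]$. Label rim nodes $1,2,\dots$ along the rim path from $(1,\lambda_1)$ to $(l(\lambda),1)$ (top-right to bottom-left). The first $p$-segment is the rim nodes labelled $1,\dots,p$ (or all if fewer). If the last node $(i,j)$ of a $p$-segment lies in the last row, stop; otherwise with $l$ the smallest label in row $i+1$ the next $p$-segment is the rim nodes labelled $l,\dots,l+p-1$ (or up to the last). The $p$-rim is the union of the $p$-segments. $p$-rim*: $U_\lambda=\{(i,j)\in p\text{-rim of }\lambda: i\le j\}$, $L_\lambda=\{(j,i):(i,j)\in U_\lambda\}$, $\mathrm{Rim}^*_p(\lambda)=U_\lambda\cup L_\lambda$, and $a^*_\lambda=\#\mathrm{Rim}^*_p(\lambda)$. *)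

From mathcomp Require Import all_boot.
Set Implicit Arguments. Unset Strict Implicit. Unset Printing Implicit Defensive.

Definition is_partition (la : seq nat) : bool :=
  sorted geq la && all (fun x => 0 < x) la.

(* lambda_i, 1-indexed rows; 0 beyond the last part. *)
Definition part (la : seq nat) (i : nat) : nat := nth 0 la i.-1.

Definition in_diag (la : seq nat) (i j : nat) : bool :=
  [&& 0 < i, 0 < j & j <= part la i].

Definition self_conjugate (la : seq nat) : Prop :=
  forall i j, in_diag la i j = in_diag la j i.

Definition diag_nodes (la : seq nat) : seq (nat * nat) :=
  flatten [seq [seq (i, j) | j <- rev (iota 1 (part la i))] | i <- iota 1 (size la)].

(* The rim: nodes (i,j) with (i+1,j+1) not in [lambda], listed in the rim-path
   order from (1,lambda_1) to (l(lambda),1): the path goes down row by row and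
   leftwards inside a row, so this is the order of diag_nodes. The label of a
   rim node is its (0-based) position in this list plus one. *)
Definition rim (la : seq nat) : seq (nat * nat) :=
  [seq x <- diag_nodes la | ~~ in_diag la x.1.+1 x.2.+1].

(* p-segments, on 0-based positions in the rim list r.  If its
   last node lies in the last row l, stop; otherwise the next segment starts
   at the smallest position whose node lies in the next row.  [fuel] bounds the
   number of segments (each segment is nonempty and starts strictly later). *)
Fixpoint prim_pos (p l : nat) (r : seq (nat * nat)) (fuel s : nat) : seq nat :=
  match fuel with
  | 0 => [::]
  | f.+1 =>
      let stop := minn (s + p) (size r) in
      let seg := iota s (stop - s) in
      let i := (nth (0, 0) r stop.-1).1 in
      if i == l then seg
      else seg ++ prim_pos p l r f (find (fun x : nat * nat => x.1 == i.+1) r)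
  end.

Definition p_rim (p : nat) (la : seq nat) : seq (nat * nat) :=
  let r := rim la in
  [seq nth (0, 0) r k | k <- prim_pos p (size la) r (size r).+1 0].

Definition U_set (p : nat) (la : seq nat) : seq (nat * nat) :=
  [seq x <- p_rim p la | x.1 <= x.2].

Definition L_set (p : nat) (la : seq nat) : seq (nat * nat) :=
  [seq (x.2, x.1) | x <- U_set p la].

Definition rim_star (p : nat) (la : seq nat) : seq (nat * nat) :=
  undup (U_set p la ++ L_set p la).

Definition a_star (p : nat) (la : seq nat) : nat := size (rim_star p la).

From mathcomp Require Import all_boot zify.
Set Implicit Arguments. Unset Strict Implicit.

(* Along the rim the content j - i strictly decreases, so the rim meets the
   main diagonal exactly once, at the corner (d, d) of the Durfee square, say
   at rim position t.  The p-rim nodes with i <= j are then those at p-rim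
   positions <= t, and Rim*_p consists of the ones at positions < t, their
   transposes, and (d, d) if t is a p-rim position:
     a*_lambda = 2 #{p-rim positions < t} + [t is a p-rim position].
   If a*_lambda is even, t is skipped by the p-rim; then every p-segment that
   starts before t also ends before t and so has exactly p nodes, whence p
   divides #{p-rim positions < t}. *)

Lemma part_le_of_le la i j :
  sorted geq la -> 0 < i -> i <= j -> part la j <= part la i.
Proof.
move=> la_sorted i_gt0 le_ij; rewrite /part.
have [j_lt|j_ge] := ltnP j.-1 (size la); last by rewrite nth_default.
have geq_trans : transitive geq by move=> a b c /= h1 h2; exact: leq_trans h2 h1.
apply: (sorted_leq_nth geq_trans (fun a => leqnn a) 0 la_sorted); rewrite ?inE; lia.
Qed.

Lemma in_diag_diag_nodes la x : x \in diag_nodes la -> in_diag la x.1 x.2.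
Proof.
case/flatten_mapP => i; rewrite mem_iota => /andP[i_gt0 _].
case/mapP => j; rewrite mem_rev mem_iota => /andP[j_gt0 j_le] -> /=.
rewrite /in_diag i_gt0 j_gt0 /=; lia.
Qed.

Definition reading_lt : rel (nat * nat) :=
  fun x y => (x.1 < y.1) || ((x.1 == y.1) && (y.2 < x.2)).

Lemma diag_nodes_reading_order la : pairwise reading_lt (diag_nodes la).
Proof.
suff rows m n : pairwise reading_lt
    [seq (i, j) | i <- iota m n, j <- rev (iota 1 (part la i))] by exact: rows.
elim: n m => [|n IHn] m //=; rewrite pairwise_cat IHn andbT; apply/andP; split.
  apply/allrelP => x y /mapP[j _ ->] /flatten_mapP[i].
  by rewrite mem_iota => /andP[lt_mi _] /mapP[k _ ->]; rewrite /reading_lt /= lt_mi.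
have : sorted [rel a b | b < a] (rev (iota 1 (part la m))).
  by rewrite rev_sorted; exact: iota_ltn_sorted.
rewrite pairwise_map sorted_pairwise; last by move=> a b c /=; lia.
by apply: sub_pairwise => a b /= lt_ba; rewrite /reading_lt /= eqxx lt_ba orbT.
Qed.

(* [x] lies weakly above [y] and has strictly larger content [x.2 - x.1];
   the content comparison is written without truncated subtraction. *)
Definition rim_lt : rel (nat * nat) :=
  fun x y => (x.1 <= y.1) && (x.1 + y.2 < y.1 + x.2).

Lemma rim_order la : sorted geq la -> pairwise rim_lt (rim la).
Proof.
move=> la_sorted.
pose in_rim x := (x \in diag_nodes la) && ~~ in_diag la x.1.+1 x.2.+1.
have all_rim : all in_rim (rim la) by apply/allP => x; rewrite mem_filter andbC.
apply: (sub_in_pairwise (P := in_rim)) all_rim _; last first.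
  exact/pairwise_filter/diag_nodes_reading_order.
move=> [a b] [c e] /andP[_ corner_ab] /andP[ce_diag _]; rewrite /reading_lt /rim_lt /=.
have /and3P[_ _ /= e_le] := in_diag_diag_nodes ce_diag.
case/orP => [lt_ac | /andP[/eqP <- lt_eb]]; last by rewrite leqnn; lia.
have := part_le_of_le la_sorted (isT : 0 < a.+1) lt_ac.
by move: corner_ab; rewrite /in_diag /= -leqNgt; lia.
Qed.

Lemma rim_rows_sorted la :
  sorted geq la -> pairwise (fun x y : nat * nat => x.1 <= y.1) (rim la).
Proof. by move/rim_order; apply: sub_pairwise => x y /andP[]. Qed.

Lemma rim_uniq la : sorted geq la -> uniq (rim la).
Proof.
by move/rim_order/pairwise_uniq; apply => x; rewrite /rim_lt ltnn andbF.
Qed.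

Lemma exists_diagonal_rim_node la :
  is_partition la -> la != [::] -> exists d, (d, d) \in rim la.
Proof.
case/andP => _ la_pos la_nnil.
pose on_durfee i := (0 < i) && (i <= part la i).
have on_durfee1 : exists i, on_durfee i.
  exists 1; rewrite /on_durfee /part; clear on_durfee.
  by case: la la_pos la_nnil => //= a s /andP[].
have durfee_le_size i : on_durfee i -> i <= size la.
  move=> /andP[i_gt0 le_i]; rewrite leqNgt; apply/negP => lt_size.
  by move: le_i; rewrite /part nth_default; lia.
have [d /andP[d_gt0 le_d] d_max] := ex_maxnP on_durfee1 durfee_le_size.
exists d; rewrite mem_filter /=; apply/andP; split.
  apply/negP => /and3P[_ _ le_d1].
  by have := d_max d.+1; rewrite /on_durfee le_d1 /= => /(_ isT); rewrite ltnn.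
apply/flatten_mapP; exists d.
  by rewrite mem_iota; have := durfee_le_size d; rewrite /on_durfee d_gt0 le_d; lia.
by apply/mapP; exists d; rewrite // mem_rev mem_iota; lia.
Qed.

Section PRimPositions.
Variables (p l : nat) (r : seq (nat * nat)).
Hypothesis rows_sorted : pairwise (fun x y : nat * nat => x.1 <= y.1) r.

Lemma next_row_start_ge stop : stop <= size r ->
  stop <= find (fun x : nat * nat => x.1 == (nth (0, 0) r stop.-1).1.+1) r.
Proof.
case: stop => [//|st] /= st_lt; rewrite leqNgt; apply/negP.
set next_row := (fun x : nat * nat => _) => find_lt.
have found : has next_row r by rewrite has_find; lia.
have /eqP row_found := nth_find (0, 0) found.
have : (nth (0, 0) r (find next_row r)).1 <= (nth (0, 0) r st).1.
  have [lt_st|//|-> //] := ltngtP (find next_row r) st; last lia.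
  by apply: (pairwiseP (0, 0) rows_sorted); rewrite ?inE; lia.
by rewrite row_found ltnn.
Qed.

Lemma prim_pos_range fuel s :
  all (fun k => s <= k < size r) (prim_pos p l r fuel s).
Proof.
elim: fuel s => [|f IHf] s //=.
have stop_le : minn (s + p) (size r) <= size r by rewrite geq_minr.
have seg_range : all (fun k => s <= k < size r) (iota s (minn (s + p) (size r) - s)).
  by apply/allP => k; rewrite mem_iota; lia.
case: ifP => _ //; rewrite all_cat seg_range.
apply: sub_all (IHf _) => k /=; have := next_row_start_ge stop_le; lia.
Qed.

Lemma prim_pos_uniq fuel s : uniq (prim_pos p l r fuel s).
Proof.
elim: fuel s => [|f IHf] s //=.
case: ifP => _; rewrite ?iota_uniq // cat_uniq iota_uniq IHf andbT /=.
apply/hasPn => k /(allP (prim_pos_range _ _)) /= range_k; rewrite mem_iota.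
have := next_row_start_ge (geq_minr (s + p) (size r)); lia.
Qed.

(* A p-segment starting at or before [t] and not containing [t] has p nodes,
   and the p-segments after the first one starting beyond [t] contribute
   nothing. *)
Lemma dvdn_count_prim_pos_lt t fuel s : t < size r -> s <= t ->
  t \notin prim_pos p l r fuel s -> p %| count (fun k => k < t) (prim_pos p l r fuel s).
Proof.
move=> t_lt; elim: fuel s => [|f IHf] s le_st //=.
set stop := minn (s + p) (size r).
have full_seg : t \notin iota s (stop - s) ->
    count (fun k => k < t) (iota s (stop - s)) = p.
  rewrite mem_iota => t_out; have stop_eq : stop = s + p by rewrite /stop; lia.
  rewrite (eq_in_count (a2 := predT)) ?count_predT ?size_iota; first lia.
  by move=> k; rewrite mem_iota /=; lia.
case: ifP => _; first by move/full_seg ->.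
rewrite mem_cat negb_or count_cat => /andP[t_seg t_rest]; rewrite full_seg // dvdn_addl //.
set s' := find _ r in t_rest *.
have [le_s't|lt_ts'] := leqP s' t; first exact: IHf.
rewrite (eq_in_count (a2 := pred0)) ?count_pred0 //.
by move=> k /(allP (prim_pos_range _ _)) /=; lia.
Qed.

End PRimPositions.

Definition swap_node (x : nat * nat) : nat * nat := (x.2, x.1).

Lemma size_undup_cat_swap (U : seq (nat * nat)) :
  uniq U -> all (fun x => x.1 <= x.2) U ->
  size (undup (U ++ map swap_node U)) = size U + count (fun x => x.1 < x.2) U.
Proof.
move=> U_uniq U_upper.
set V := U ++ map swap_node [seq x <- U | x.1 < x.2].
have swap_inj : injective swap_node by move=> [a b] [c e] [-> ->].
have V_uniq : uniq V.
  rewrite cat_uniq U_uniq (map_inj_uniq swap_inj) filter_uniq // andbT /=.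
  apply/hasPn => y /mapP[x]; rewrite mem_filter => /andP[lt_x _] ->.
  by apply/negP => /(allP U_upper) /=; rewrite leqNgt lt_x.
have same_mem : undup (U ++ map swap_node U) =i V.
  move=> y; rewrite mem_undup !mem_cat; case: (boolP (y \in U)) => //= y_notin.
  apply/mapP/mapP => -[x x_in y_eq]; exists x => //.
    rewrite mem_filter x_in andbT ltn_neqAle (allP U_upper) // andbT.
    apply: contraNN y_notin; rewrite y_eq; case: x x_in {y_eq} => a b x_in /= /eqP eq_ab.
    by rewrite /swap_node /= eq_ab in x_in *.
  by move: x_in; rewrite mem_filter => /andP[].
rewrite (perm_size (uniq_perm (undup_uniq _) V_uniq same_mem)).
by rewrite size_cat size_map size_filter.
Qed.

Lemma count_leq_uniq (s : seq nat) t : uniq s ->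
  count (fun k => k <= t) s = count (fun k => k < t) s + (t \in s).
Proof.
move=> s_uniq; rewrite -(count_uniq_mem t s_uniq) -count_predUI.
rewrite [count (predI _ _) _](eq_count (a2 := pred0)) ?count_pred0 ?addn0.
  by apply: eq_count => k /=; lia.
by move=> k /=; lia.
Qed.

Lemma p_rim_uniq p la : sorted geq la -> uniq (p_rim p la).
Proof.
move=> la_sorted; have r_uniq := rim_uniq la_sorted.
have rows_sorted := rim_rows_sorted la_sorted.
rewrite /p_rim map_inj_in_uniq ?prim_pos_uniq //.
move=> i j /(allP (prim_pos_range _ _ rows_sorted _ _)) /andP[_ i_lt].
move=> /(allP (prim_pos_range _ _ rows_sorted _ _)) /andP[_ j_lt].
by move/eqP; rewrite nth_uniq // => /eqP.
Qed.

Lemma nth_above_diag r d k : pairwise rim_lt r -> (d, d) \in r -> k < size r ->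
  let x := nth (0, 0) r k in
  ((x.1 < x.2) = (k < index (d, d) r)) * ((x.1 <= x.2) = (k <= index (d, d) r)).
Proof.
move=> r_order d_in k_lt /=; set t := index (d, d) r.
have t_lt : t < size r by rewrite index_mem.
have nth_t : nth (0, 0) r t = (d, d) by rewrite nth_index.
have [lt_kt|lt_tk|->] := ltngtP k t; last by rewrite nth_t leqnn ltnn.
  have := (pairwiseP (0, 0) r_order) k t k_lt t_lt lt_kt.
  by rewrite nth_t /rim_lt /= => /andP[_ content_lt]; split; lia.
have := (pairwiseP (0, 0) r_order) t k t_lt k_lt lt_tk.
by rewrite nth_t /rim_lt /= => /andP[_ content_lt]; split; apply/negbTE; lia.
Qed.

Lemma a_star_count p la d : sorted geq la -> (d, d) \in rim la ->
  let P := prim_pos p (size la) (rim la) (size (rim la)).+1 0 in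
  let t := index (d, d) (rim la) in
  a_star p la = (count (fun k => k < t) P).*2 + (t \in P).
Proof.
move=> la_sorted d_in P t.
have rows_sorted := rim_rows_sorted la_sorted.
have P_lt k : k \in P -> k < size (rim la).
  by move/(allP (prim_pos_range _ _ rows_sorted _ _)) => /andP[].
have U_uniq : uniq (U_set p la) by rewrite filter_uniq ?p_rim_uniq.
rewrite /a_star /rim_star /L_set -/swap_node.
rewrite (size_undup_cat_swap U_uniq (filter_all _ _)) size_filter count_filter /p_rim.
rewrite !count_map -/P.
rewrite (eq_in_count (a2 := fun k => k <= t)); last first.
  by move=> k /P_lt k_lt /=; rewrite (nth_above_diag (rim_order la_sorted) d_in k_lt).
rewrite (eq_in_count (a1 := preim _ _) (a2 := fun k => k < t)); last first.
  move=> k /P_lt k_lt /=; rewrite !(nth_above_diag (rim_order la_sorted) d_in k_lt).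
  by rewrite andb_idr // => /ltnW.
rewrite -addnn addnAC; congr (_ + _).
by rewrite (count_leq_uniq _ (prim_pos_uniq _ _ rows_sorted _ _)).
Qed.

Theorem lemma3p10 (p : nat) (la : seq nat) :
  prime p -> odd p ->
  is_partition la -> la != [::] -> self_conjugate la ->
  ~~ odd (a_star p la) -> p %| a_star p la.
Proof.
move=> _ _ la_part la_nnil _.
have la_sorted : sorted geq la by case/andP: la_part.
have [d d_in] := exists_diagonal_rim_node la_part la_nnil.
rewrite (a_star_count p la_sorted d_in).
set t := index _ _.
case: (boolP (_ \in _)) => [_|t_notin]; first by rewrite oddD odd_double.
rewrite addn0 -muln2 => _; apply: dvdn_mulr.
have t_lt : t < size (rim la) by rewrite index_mem.
exact: (@dvdn_count_prim_pos_lt p (size la) (rim la) (rim_rows_sorted la_sorted) t _ 0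
         t_lt (leq0n t) t_notin).
Qed.
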